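(* Let $\mathcal{A}$ be a nice GFG-tNCW that is minimal, i.e., $|\mathcal{A}|\le|\mathcal{B}|$ for every GFG-tNCW $\mathcal{B}$ with $L(\mathcal{B})=L(\mathcal{A})$. Then $\mathcal{A}$ is safe-centralized and safe-minimal.
   Context: A tNCW (transition-based nondeterministic co-Büchi word automaton) is $\mathcal{A}=\langle\Sigma,Q,q_0,\delta,\alpha\rangle$, where $\Sigma$ is a finite alphabet, $Q$ a finite set of states, $q_0\in Q$ the initial state, $\delta:Q\times\Sigma\to 2^Q\setminus\{\emptyset\}$ the transition function, with induced transition relation $\Delta=\{\langle q,\sigma,s\rangle: s\in\delta(q,\sigma)\}$, and $\alpha\subseteq\Delta$. The size $|\mathcal{A}|$ is $|Q|$. Transitions in $\alpha$ are $\alpha$-transitions, those in $\Delta\setminus\alpha$ are $\bar\alpha$-transitions; $\delta^{\alpha}(q,\sigma)=\{s:\langle q,\sigma,s\rangle\in\alpha\}$ and $\delta^{\bar\alpha}(q,\sigma)=\{s:\langle q,\sigma,s\rangle\in\Delta\setminus\alpha\}$. A run on $w=\sigma_1\sigma_2\cdots$ is $r_0r_1\cdots$ with $r_0=q_0$ and $r_{i+1}\in\delta(r_i,\sigma_{i+1})$; it is accepting iff it traverses $\alpha$-transitions only finitely often; $L(\mathcal{A})$ is the set of words with an accepting run. $\mathcal{A}^q$ is $\mathcal{A}$ with initial state $q$. States $q,s$ are equivalent, $q\sim s$, if $L(\mathcal{A}^q)=L(\mathcal{A}^s)$. $\mathcal{A}$ is GFG if there is $f:\Sigma^*\to Q$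 with $f(\epsilon)=q_0$, $\langle f(u),\sigma,f(u\sigma)\rangle\in\Delta$ for all $u\in\Sigma^*,\sigma\in\Sigma$, and such that for every $w\in L(\mathcal{A})$ the run $f(w[1,0]),f(w[1,1]),f(w[1,2]),\dots$ is accepting (where $w[1,i]$ is the length-$i$ prefix). A state $q$ is GFG if $\mathcal{A}^q$ is GFG. $\mathcal{A}$ is semantically deterministic if for all $q,\sigma$, all states in $\delta(q,\sigma)$ are pairwise equivalent; safe deterministic if $|\delta^{\bar\alpha}(q,\sigma)|\le 1$ for all $q,\sigma$. The safe components of $\mathcal{A}$ are the strongly connected components of the graph on $Q$ with an edge $q\to q'$ iff $q'\in\delta^{\bar\alpha}(q,\sigma)$ for some $\sigma$. $\mathcal{A}$ is normal if whenever there is a path of $\bar\alpha$-transitions from $q$ to $s$, there is also one from $s$ to $q$. $\mathcal{A}$ is nice if all its states are reachable from $q_0$ and GFG, and $\mathcal{A}$ is normal, safe deterministic and semantically deterministic. A run is safe if it traverses no $\alpha$-transition; $L_{safe}(\mathcal{A}^q)$ is the set of infinite words having a safe run from $q$. Write $q\approx s$ if $q\sim s$ and $L_{safe}(\mathcal{A}^q)=L_{safe}(\mathcal{A}^s)$, and $q\precsim s$ if $q\sim s$ and $L_{safe}(\mathcal{A}^q)\subseteq L_{safe}(\mathcal{A}^s)$. $\mathcal{A}$ is safe-minimal if it has no two distinct states $q\approx s$; safe-centralized if $q\precsim s$ implies that $q$ and $s$ lie in the same safe component. *)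

From mathcomp Require Import all_boot.
Set Implicit Arguments. Unset Strict Implicit. Unset Printing Implicit Defensive.

(* A tNCW over alphabet Sigma with (finite) state type Q.
   alpha is the set of alpha-transitions, given as a boolean predicate on
   triples; only its restriction to the transition relation Delta matters. *)
Record tNCW (Sigma Q : finType) := TNCW {
  q0 : Q;
  delta : Q -> Sigma -> {set Q};
  alpha : Q -> Sigma -> Q -> bool;
  delta_ne : forall q a, delta q a != set0
}.

Section Defs.
Variables (Sigma Q : finType) (A : tNCW Sigma Q).

(* infinite words w = sigma_1 sigma_2 ... are functions nat -> Sigma,
   with w i = sigma_{i+1} *)
Definition word := nat -> Sigma.

Definition is_run (q : Q) (w : word) (r : nat -> Q) : Prop :=
  r 0 = q /\ forall i, r i.+1 \in delta A (r i) (w i).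

Definition accepting_run (w : word) (r : nat -> Q) : Prop :=
  exists N, forall i, N <= i -> ~~ alpha A (r i) (w i) (r i.+1).

Definition lang_from (q : Q) (w : word) : Prop :=
  exists r, is_run q w r /\ accepting_run w r.

Definition lang (w : word) : Prop := lang_from (q0 A) w.

Definition safe_lang_from (q : Q) (w : word) : Prop :=
  exists r, is_run q w r /\ forall i, ~~ alpha A (r i) (w i) (r i.+1).

Definition prefix (w : word) (i : nat) : seq Sigma := mkseq w i.

Definition GFG_state (q : Q) : Prop :=
  exists f : seq Sigma -> Q,
    f [::] = q /\
    (forall u a, f (rcons u a) \in delta A (f u) a) /\
    (forall w, lang_from q w -> accepting_run w (fun i => f (prefix w i))).

Definition GFG : Prop := GFG_state (q0 A).

Definition equiv_st (q s : Q) : Prop := forall w, lang_from q w <-> lang_from s w.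

Definition safe_equiv (q s : Q) : Prop :=
  equiv_st q s /\ forall w, safe_lang_from q w <-> safe_lang_from s w.

Definition safe_le (q s : Q) : Prop :=
  equiv_st q s /\ forall w, safe_lang_from q w -> safe_lang_from s w.

Definition delta_safe (q : Q) (a : Sigma) : {set Q} :=
  [set s in delta A q a | ~~ alpha A q a s].

Definition sem_det : Prop :=
  forall q a s s', s \in delta A q a -> s' \in delta A q a -> equiv_st s s'.

Definition safe_det : Prop := forall q a, #|delta_safe q a| <= 1.

Definition safe_edge : rel Q := fun q q' => [exists a, q' \in delta_safe q a].

Definition trans_edge : rel Q := fun q q' => [exists a, q' \in delta A q a].

Definition normal : Prop :=
  forall q s, connect safe_edge q s -> connect safe_edge s q.

Definition same_safe_comp (q s : Q) : Prop :=
  connect safe_edge q s /\ connect safe_edge s q.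

Definition nice : Prop :=
  (forall q, connect trans_edge (q0 A) q) /\
  (forall q, GFG_state q) /\
  normal /\ safe_det /\ sem_det.

Definition safe_minimal : Prop := forall q s, safe_equiv q s -> q = s.

Definition safe_centralized : Prop :=
  forall q s, safe_le q s -> same_safe_comp q s.

End Defs.

Definition minimal_GFG (Sigma Q : finType) (A : tNCW Sigma Q) : Prop :=
  forall (Q' : finType) (B : tNCW Sigma Q'),
    GFG B -> (forall w, lang B w <-> lang A w) -> #|Q| <= #|Q'|.

From Pilot Require Import Defs.
From mathcomp Require Import all_boot boolp.
Set Implicit Arguments. Unset Strict Implicit. Unset Printing Implicit Defensive.

(* Both properties follow from one reduction. Call a set S of states
   prunable if every y in S has a substitute h y outside S with y ≾ h y, and
   L_safe(h y) ⊆ L_safe(y) whenever a safe transition enters y from outside S.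
   Removing S, letting every transition lead to all remaining states
   equivalent to one of its targets, and keeping as safe only the transitions
   to (h-images of) safe targets with a nonempty safe language, yields a
   GFG-tNCW with the same language: semantic determinism preserves the
   language, safe determinism lets safe runs of the new automaton be replayed
   in A, and a strategy of A is followed by a strategy of the new automaton
   that stays ≾-above it. Minimality thus forces every prunable set to be
   empty. If q ≈ s with q ≠ s, then {q} is prunable with h = s. If q ≾ s with
   q, s in different safe components, the safe component S of q is prunable:
   by normality no safe transition enters S, and following safe paths from q
   alongside s gives every state of S a ≾-larger substitute reachable from s,
   hence outside S. *)

Lemma dependent_choice (T : Type) (P : nat -> T -> Prop) (R : nat -> T -> T -> Prop)
    (x : T) :
  P 0 x -> (forall i y, P i y -> exists2 z, R i y z & P i.+1 z) ->
  exists2 r : nat -> T, r 0 = x & forall i, R i (r i) (r i.+1).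
Proof.
move=> P0 step.
have /choice [nxt nxtP] : forall iy : nat * T,
    exists z, P iy.1 iy.2 -> R iy.1 iy.2 z /\ P iy.1.+1 z.
  move=> [i y]; have [/step [z Rz Pz]|nPy] := EM (P i y); first by exists z.
  by exists x => /nPy.
pose fix r i := if i is j.+1 then nxt (j, r j) else x.
have rP i : P i (r i) by elim: i => //= i /(nxtP (i, _)) [].
by exists r => // i; have [] := nxtP (i, r i) (rP i).
Qed.

Lemma prefix_rec (X T : Type) (x0 : T) (step : seq X -> T -> X -> T) :
  exists2 g : seq X -> T, g [::] = x0 & forall u a, g (rcons u a) = step u (g u) a.
Proof.
pose fix grev l := if l is a :: l' then step (rev l') (grev l') a else x0.
by exists (fun u => grev (rev u)) => // u a; rewrite rev_rcons /= revK.
Qed.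

Lemma connect_edge_out (T : finType) (e : rel T) x y z :
  connect e z x -> e x y -> exists z', e z z'.
Proof.
move=> /connectP [[|z' p] /= zp ->] exy; first by exists y.
by exists z'; case/andP: zp.
Qed.

Section Words.
Variable Sigma : Type.
Implicit Types (w : nat -> Sigma) (a : Sigma).

Definition wcons a w : nat -> Sigma := fun i => if i is j.+1 then w j else a.

Definition suffix w n : nat -> Sigma := fun i => w (n + i).

Lemma suffix0 w : suffix w 0 = w.
Proof. exact: funext. Qed.

Lemma suffix_cons w n : wcons (w n) (suffix w n.+1) = suffix w n.
Proof. by apply: funext => -[|j] /=; rewrite /suffix ?addn0 ?addSnnS. Qed.

End Words.

Section Automaton.
Variables (Sigma Q : finType) (A : tNCW Sigma Q).
Implicit Types (x y z b : Q) (a : Sigma) (w v : nat -> Sigma).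
Notation L := (lang_from A).
Notation Ls := (safe_lang_from A).
Notation E := (safe_edge A).

Definition live x := exists w, Ls x w.

Lemma safe_succ_delta x a y : y \in delta_safe A x a -> y \in delta A x a.
Proof. by rewrite inE => /andP []. Qed.

Lemma safe_lang_fromP x w :
  Ls x w <-> exists2 r, r 0 = x & forall i, r i.+1 \in delta_safe A (r i) (w i).
Proof.
split=> [[r [[r0 rstep] rsafe]]|[r r0 rstep]].
  by exists r => // i; rewrite inE rstep rsafe.
exists r; split; first by split=> // i; apply: safe_succ_delta (rstep i).
by move=> i; have := rstep i; rewrite inE => /andP [].
Qed.

Lemma safe_lang_sub_lang x w : Ls x w -> L x w.
Proof. by case=> r [run rsafe]; exists r; split => //; exists 0. Qed.

Lemma lang_cons x y a w : y \in delta A x a -> L y w -> L x (wcons a w).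
Proof.
move=> xy [r [[r0 rstep] [N rsafe]]].
exists (fun i => if i is j.+1 then r j else x); split; first split=> //.
  by case=> [|i] /=; [rewrite r0 | apply: rstep].
by exists N.+1 => -[|i] //; apply: rsafe.
Qed.

Lemma lang_uncons x a w : L x (wcons a w) -> exists2 y, y \in delta A x a & L y w.
Proof.
move=> [r [[r0 rstep] [N rsafe]]]; exists (r 1); first by rewrite -r0 (rstep 0).
exists (fun i => r i.+1); split; first by split=> // i; apply: (rstep i.+1).
by exists N => i le_Ni; apply: rsafe (leqW le_Ni).
Qed.

Lemma safe_lang_cons x y a w : y \in delta_safe A x a -> Ls y w -> Ls x (wcons a w).
Proof.
move=> xy /safe_lang_fromP [r r0 rstep]; apply/safe_lang_fromP.
by exists (fun i => if i is j.+1 then r j else x) => // -[|i] /=; rewrite ?r0.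
Qed.

Lemma safe_lang_uncons x a w :
  Ls x (wcons a w) -> exists2 y, y \in delta_safe A x a & Ls y w.
Proof.
move=> /safe_lang_fromP [r r0 rstep]; exists (r 1); first by rewrite -r0 (rstep 0).
by apply/safe_lang_fromP; exists (fun i => r i.+1) => // i; apply: (rstep i.+1).
Qed.

Lemma safe_lang_suffix x w r N : is_run A x w r ->
  (forall i, N <= i -> ~~ alpha A (r i) (w i) (r i.+1)) -> Ls (r N) (suffix w N).
Proof.
move=> [_ rstep] rsafe; exists (fun j => r (N + j)); split.
  by split=> [|j]; rewrite ?addn0 // addnS; apply: rstep.
by move=> j; rewrite addnS; apply/rsafe/leq_addr.
Qed.

Lemma strategy_run x (f : seq Sigma -> Q) w : f [::] = x ->
  (forall u a, f (rcons u a) \in delta A (f u) a) ->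
  is_run A x w (fun i => f (Defs.prefix w i)).
Proof. by move=> f0 fstep; split=> // i; rewrite /Defs.prefix mkseqS. Qed.

Lemma safe_lang_of_invariant (P : nat -> Q -> Prop) x w : P 0 x ->
  (forall i y, P i y -> exists2 z, z \in delta_safe A y (w i) & P i.+1 z) -> Ls x w.
Proof. by move=> P0 step; apply/safe_lang_fromP; apply: dependent_choice P0 step. Qed.

Lemma live_of_invariant (P : Q -> Prop) x : P x ->
  (forall y, P y -> exists2 z, E y z & P z) -> live x.
Proof.
move=> Px step.
have [r r0 redge] := dependent_choice (P := fun=> P) (R := fun=> E) Px (fun=> step).
have /choice [w rstep] : forall i, exists a, r i.+1 \in delta_safe A (r i) a.
  by move=> i; apply/existsP/redge.
by exists w; apply/safe_lang_fromP; exists r.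
Qed.

Lemma equiv_st_sym x y : equiv_st A x y -> equiv_st A y x.
Proof. by move=> xy w; split=> /xy. Qed.

Lemma equiv_st_trans x y z : equiv_st A x y -> equiv_st A y z -> equiv_st A x z.
Proof. by move=> xy yz w; split=> [/xy/yz|/yz/xy]. Qed.

Lemma safe_le_refl x : safe_le A x x.
Proof. by []. Qed.

Lemma safe_le_trans x y z : safe_le A x y -> safe_le A y z -> safe_le A x z.
Proof.
move=> [xy sxy] [yz syz]; split; first exact: equiv_st_trans xy yz.
by move=> w /sxy /syz.
Qed.

Lemma sem_det_succ x x' a y y' : sem_det A -> equiv_st A x x' ->
  y \in delta A x a -> y' \in delta A x' a -> equiv_st A y y'.
Proof.
move=> sdet.
suff sub x1 x2 y1 y2 : equiv_st A x1 x2 -> y1 \in delta A x1 a ->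
    y2 \in delta A x2 a -> forall w, L y1 w -> L y2 w.
  move=> xx' xy x'y' w; split; first exact: sub xx' xy x'y' w.
  exact: sub (equiv_st_sym xx') x'y' xy w.
move=> x12 x1y1 x2y2 w /(lang_cons x1y1) /x12 /lang_uncons [z x2z].
by move/(sdet _ _ _ _ x2z x2y2).
Qed.

Lemma safe_succ_uniq x a y y' : safe_det A ->
  y \in delta_safe A x a -> y' \in delta_safe A x a -> y = y'.
Proof. by move=> sdet xy xy'; move/card_le1_eqP: (sdet x a); apply. Qed.

Lemma safe_succ_exists x b a y : (forall v, Ls x v -> Ls b v) ->
  y \in delta_safe A x a -> live y -> exists y', y' \in delta_safe A b a.
Proof.
move=> sub xy [v yv]; have /sub /safe_lang_uncons [y' by' _] := safe_lang_cons xy yv.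
by exists y'.
Qed.

Lemma safe_lang_sub_succ x b a y y' : safe_det A -> (forall v, Ls x v -> Ls b v) ->
  y \in delta_safe A x a -> y' \in delta_safe A b a -> forall v, Ls y v -> Ls y' v.
Proof.
move=> sdet sub xy by' v /(safe_lang_cons xy) /sub /safe_lang_uncons [y'' by''].
by rewrite (safe_succ_uniq sdet by' by'').
Qed.

Lemma safe_le_succ x b a y : safe_det A -> sem_det A -> safe_le A x b ->
  y \in delta_safe A x a -> live y -> exists2 y', y' \in delta_safe A b a & safe_le A y y'.
Proof.
move=> sdet smdet [xb sxb] xy ly; have [y' by'] := safe_succ_exists sxb xy ly.
exists y' => //; split; last exact: safe_lang_sub_succ sdet sxb xy by'.
exact: sem_det_succ smdet xb (safe_succ_delta xy) (safe_succ_delta by').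
Qed.

Lemma safe_edge_live x y : normal A -> E x y -> live y.
Proof.
move=> nrm xy; apply: (live_of_invariant (P := fun z => connect E z x)).
  exact: nrm (connect1 xy).
move=> z zx; have [z' zz'] := connect_edge_out zx xy.
by exists z' => //; apply: connect_trans (nrm _ _ (connect1 zz')) zx.
Qed.

Lemma safe_le_connect x b y : normal A -> safe_det A -> sem_det A ->
  safe_le A x b -> connect E x y -> exists2 b', connect E b b' & safe_le A y b'.
Proof.
move=> nrm sdet smdet + /connectP [p + ->].
elim: p x b => [|m p IH] x b xb /=; first by exists b.
case/andP=> xm /(IH m) {}IH; have [a xma] := existsP xm.
have [b1 bb1 mb1] := safe_le_succ sdet smdet xb xma (safe_edge_live nrm xm).
have [b' b1b' le_b'] := IH b1 mb1; exists b' => //.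
by apply: connect_trans b1b'; apply/connect1/existsP; exists a.
Qed.

End Automaton.

Section Pruning.
Variables (Sigma Q : finType) (A : tNCW Sigma Q).
Implicit Types (x y : Q) (a : Sigma) (w v : nat -> Sigma).
Notation L := (lang_from A).
Notation Ls := (safe_lang_from A).

Variables (S : {set Q}) (h : Q -> Q).
Hypothesis safe_detA : safe_det A.
Hypothesis sem_detA : sem_det A.
Hypothesis h_notin : forall y, y \in S -> h y \notin S.
Hypothesis h_safe_le : forall y, y \in S -> safe_le A y (h y).
Hypothesis h_entry : forall p a y w, p \notin S -> y \in S ->
  y \in delta_safe A p a -> Ls (h y) w -> Ls y w.

Definition redirect y := if y \in S then h y else y.

Lemma redirect_notin y : redirect y \notin S.
Proof. by rewrite /redirect; case: ifP => [/h_notin|->]. Qed.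

Lemma redirect_safe_le y : safe_le A y (redirect y).
Proof. by rewrite /redirect; case: ifP => [/h_safe_le|_] //; apply: safe_le_refl. Qed.

Notation QS := {x : Q | x \notin S}.

Lemma redirect_entry (t : QS) a y w :
  y \in delta_safe A (val t) a -> Ls (redirect y) w -> Ls y w.
Proof. by rewrite /redirect; case: ifP => // yS; apply: h_entry (valP t) yS. Qed.

Definition redirectS y : QS := exist _ (redirect y) (redirect_notin y).

Definition deltaS (t : QS) a : {set QS} :=
  [set t' | `[< exists2 y, y \in delta A (val t) a & equiv_st A y (val t') >]].

Definition alphaS (t : QS) a (t' : QS) : bool :=
  ~~ `[< exists2 y, y \in delta_safe A (val t) a & live A y /\ redirectS y = t' >].

Lemma redirectS_deltaS (t : QS) a y :
  y \in delta A (val t) a -> redirectS y \in deltaS t a.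
Proof.
by move=> ty; rewrite inE; apply/asboolP; exists y => //; case: (redirect_safe_le y).
Qed.

Lemma deltaS_neq0 (t : QS) a : deltaS t a != set0.
Proof.
have /set0Pn [y ty] := delta_ne A (val t) a.
by apply/set0Pn; exists (redirectS y); apply: redirectS_deltaS.
Qed.

Definition pruned : tNCW Sigma QS := TNCW (redirectS (q0 A)) alphaS deltaS_neq0.

Lemma pruned_safe_step (t t' : QS) a : ~~ alphaS t a t' ->
  exists2 y, y \in delta_safe A (val t) a & live A y /\ forall v, Ls y v <-> Ls (val t') v.
Proof.
rewrite negbK => /asboolP [y ty [ly <-]]; exists y => //; split=> // v.
by split; [case: (redirect_safe_le y) => _; apply | apply: redirect_entry ty].
Qed.

Lemma pruned_safe_lang (t : QS) w : safe_lang_from pruned t w -> Ls (val t) w.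
Proof.
case=> r [[r0 _] rsafe].
apply: (safe_lang_of_invariant (P := fun i x => forall v, Ls x v <-> Ls (val (r i)) v)).
  by rewrite r0.
move=> i x xr; have [y ry [ly yr]] := pruned_safe_step (rsafe i).
have [z xz] := safe_succ_exists (fun v => (xr v).2) ry ly.
exists z => // v; rewrite -yr; split.
  exact: safe_lang_sub_succ safe_detA (fun v => (xr v).1) xz ry v.
exact: safe_lang_sub_succ safe_detA (fun v => (xr v).2) ry xz v.
Qed.

Lemma pruned_lang w : lang pruned w -> lang A w.
Proof.
case=> r [[r0 rstep] [N rsafe]].
have rN : L (val (r N)) (suffix w N).
  apply/safe_lang_sub_lang/pruned_safe_lang.
  exact: (safe_lang_suffix (A := pruned)) (conj r0 rstep) rsafe.
have back i : L (val (r i.+1)) (suffix w i.+1) -> L (val (r i)) (suffix w i).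
  have := rstep i; rewrite inE => /asboolP [y ry /equiv_st_sym yr] /yr.
  by rewrite -[suffix w i]suffix_cons; apply: lang_cons ry.
have : L (val (r 0)) (suffix w 0) by elim: N {rsafe} rN => // n IH /back.
by rewrite r0 suffix0; case: (redirect_safe_le (q0 A)) => + _ => /(_ w) [].
Qed.

Lemma pruned_strategy : GFG A -> exists g : seq Sigma -> QS,
  [/\ g [::] = q0 pruned, forall u a, g (rcons u a) \in deltaS (g u) a &
      forall w, lang A w -> accepting_run pruned w (fun i => g (Defs.prefix w i))].
Proof.
move=> [f [f0 [fstep facc]]].
pose good u t a t' := [&& t' \in deltaS t a, ~~ alphaS t a t' &
                          `[< safe_le A (f (rcons u a)) (val t') >]].
have [g g0 gS] := prefix_rec (redirectS (q0 A))
  (fun u t a => odflt (redirectS (f (rcons u a))) [pick t' | good u t a t']).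
have f_le_g u : safe_le A (f u) (val (g u)).
  elim/last_ind: u => [|u a _]; first by rewrite g0 f0; apply: redirect_safe_le.
  rewrite gS; case: pickP => [t' /and3P [_ _ /asboolP] //|_].
  exact: redirect_safe_le.
have g_step u a : g (rcons u a) \in deltaS (g u) a.
  rewrite gS; case: pickP => [t' /and3P [] //|_] /=; rewrite inE; apply/asboolP.
  have [y gy] := set0Pn _ (delta_ne A (val (g u)) a); exists y => //.
  apply: equiv_st_trans (redirect_safe_le _).1.
  exact: sem_det_succ sem_detA (equiv_st_sym (f_le_g u).1) gy (fstep u a).
(* Once f only takes safe transitions, a good t' always exists. *)
exists g; split=> // w /facc [N fsafe]; exists N => i le_Ni.
have frun := strategy_run w f0 fstep.
rewrite /Defs.prefix mkseqS gS; set u := mkseq w i.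
have fu_safe : f (rcons u (w i)) \in delta_safe A (f u) (w i).
  by rewrite inE fstep; have := fsafe i le_Ni; rewrite /Defs.prefix mkseqS.
have fu_live : live A (f (rcons u (w i))).
  exists (suffix w i.+1); rewrite -mkseqS.
  apply: (safe_lang_suffix (N := i.+1) frun) => j.
  by move/(leq_trans (leqW le_Ni)); apply: fsafe.
have [y gy fy] := safe_le_succ safe_detA sem_detA (f_le_g u) fu_safe fu_live.
case: pickP => [t' /and3P [] //|nogood].
suff : good u (g u) (w i) (redirectS y) by rewrite nogood.
rewrite /good redirectS_deltaS ?(safe_succ_delta gy) //= negbK.
apply/andP; split; apply/asboolP; last exact: safe_le_trans fy (redirect_safe_le y).
exists y => //; split=> //; case: fu_live => v /fy.2; by exists v.
Qed.

Lemma prunable_set0_of_minimal : GFG A -> minimal_GFG A -> S = set0.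
Proof.
move=> gfg min; have [g [g0 g_step g_acc]] := pruned_strategy gfg.
have same_lang w : lang pruned w <-> lang A w.
  split=> [|Aw]; first exact: pruned_lang.
  by exists (fun i => g (Defs.prefix w i)); split; [apply: strategy_run | apply: g_acc].
have gfgS : GFG pruned.
  by exists g; split=> //; split=> // w /same_lang; apply: g_acc.
have := min _ pruned gfgS same_lang; rewrite card_sig -(cardsC S).
have -> : #|[pred x | x \notin S]| = #|~: S| by apply: eq_card => x; rewrite !inE.
by rewrite -{2}[#|~: S|]add0n leq_add2r leqn0 => /eqP /cards0_eq.
Qed.

End Pruning.

Section Minimality.
Variables (Sigma Q : finType) (A : tNCW Sigma Q).
Notation E := (safe_edge A).

Lemma safe_minimal_of_minimal : nice A -> minimal_GFG A -> safe_minimal A.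
Proof.
move=> [_ [gfg [_ [sdet smdet]]]] min q s [qs sqs].
case: (eqVneq q s) => // neq_qs; have s_out : s \notin [set q] by rewrite inE eq_sym.
have h_le y : y \in [set q] -> safe_le A y s.
  by move/set1P => ->; split=> // w /sqs.
have h_entry p a y w : p \notin [set q] -> y \in [set q] ->
    y \in delta_safe A p a -> safe_lang_from A s w -> safe_lang_from A y w.
  by move=> _ /set1P -> _ /sqs.
have S0 := prunable_set0_of_minimal sdet smdet (fun _ _ => s_out) h_le h_entry
  (gfg (q0 A)) min.
by have := set11 q; rewrite S0 inE.
Qed.

Lemma safe_centralized_of_minimal : nice A -> minimal_GFG A -> safe_centralized A.
Proof.
move=> [_ [gfg [nrm [sdet smdet]]]] min q s le_qs.
suff qs : connect E q s by split=> //; apply: nrm.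
apply/negPn/negP => not_qs; pose S := [set p | connect E q p].
have s_out b : connect E s b -> b \notin S.
  by rewrite inE => sb; apply: contra not_qs => /connect_trans; apply; apply: nrm.
have /choice [h hP] : forall p, exists t, p \in S -> t \notin S /\ safe_le A p t.
  move=> p; case: (boolP (p \in S)) => [|_]; last by exists s.
  rewrite inE => qp; have [t st pt] := safe_le_connect nrm sdet smdet le_qs qp.
  by exists t => _; split=> //; apply: s_out.
have no_entry p a y w : p \notin S -> y \in S -> y \in delta_safe A p a ->
    safe_lang_from A (h y) w -> safe_lang_from A y w.
  move=> pS + py; rewrite !inE in pS * => qy; case/negP: pS.
  by apply: connect_trans qy (nrm _ _ _); apply/connect1/existsP; exists a.
have S0 := prunable_set0_of_minimal sdet smdet (fun y yS => (hP y yS).1)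
  (fun y yS => (hP y yS).2) no_entry (gfg (q0 A)) min.
have : q \in S by rewrite inE connect0.
by rewrite S0 inE.
Qed.

End Minimality.

Theorem mainTheorem1 (Sigma Q : finType) (A : tNCW Sigma Q) :
  nice A -> minimal_GFG A -> safe_centralized A /\ safe_minimal A.
Proof.
move=> niceA minA.
by split; [apply: safe_centralized_of_minimal | apply: safe_minimal_of_minimal].
Qed.
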